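(* Let $(U_n)_{n\ge1}$ be the virtual isometry sequence, $y_k^{(n)}$ the renormalized eigenangles and $y_k$ their almost sure limits, as described in the context. For every $0<\eta<\frac16$ there exists $\varepsilon>0$ such that almost surely there is a (random) constant $C>0$ with $$|y_k^{(n)} - y_k| \le C n^{-\varepsilon} \quad\text{for all } n\ge1 \text{ and all } k\in\mathbb{Z} \text{ with } |k|\le n^{\eta}.$$
   Context: Virtual isometry coupling: let $(x_n)_{n\ge1}$ be independent random vectors, $x_n$ uniform on the unit sphere of $\mathbb{C}^n$. Almost surely $x_n \neq e_n$ for all $n$, so there is a unique $R_n \in U(n)$ with $R_n(e_n)=x_n$ and $R_n - I_n$ of rank one. Set $U_1=x_1$ and $U_n = R_n \begin{pmatrix} U_{n-1} & 0 \\ 0 & 1\end{pmatrix}$ for $n\ge2$; each $U_n$ is Haar-distributed on $U(n)$. Almost surely the eigenvalues of $U_n$ are distinct and different from $1$. Let $(\theta_k^{(n)})_{k\in\mathbb{Z}}$ be the increasing enumeration of all real $\theta$ with $e^{i\theta}$ an eigenvalue of $U_n$, indexed so that $\dots<\theta_0^{(n)}<0<\theta_1^{(n)}<\dots$, and $y_k^{(n)}=\frac{n}{2\pi}\theta_k^{(n)}$. It is known (result of Maples, Najnudel and Nikeghbali, taken as given) that almost surely $y_k^{(n)}\to y_k$ for every $k$, where $(y_k)$ is a sine-kernel determinantal point process, and that almost surely, for every $\delta>0$, there is a random constant $C_\delta$ (independent of $k,n$) with $|y_k^{(n)}-y_k|\le C_\delta(1+k^2)n^{-1/3+\delta}$ for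 all $n$ and all $k\in[-n^{1/4},n^{1/4}]$. *)

From HB Require Import structures.
From mathcomp Require Import all_boot all_order all_algebra.
From mathcomp Require Import all_classical all_reals all_analysis.
From mathcomp Require Import complex.
Set Implicit Arguments. Unset Strict Implicit. Unset Printing Implicit Defensive.
Import Order.TTheory GRing.Theory Num.Theory.
Local Open Scope classical_set_scope.
Local Open Scope ring_scope.

Section VI.
Variable R : realType.
Local Notation C := (complex.complex R).

Definition adjmx m n (M : 'M[C]_(m, n)) : 'M[C]_(n, m) := map_mx (@complex.conjc R) M^T.

Definition unitary_mx n (M : 'M[C]_n) : Prop := M *m adjmx M = 1%:M.

Definition vnorm2 n (v : 'cV[C]_n) : R :=
  \sum_(i < n) (complex.Re (v i 0) ^+ 2 + complex.Im (v i 0) ^+ 2).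

Definition on_sphere n (v : 'cV[C]_n) : Prop := vnorm2 v = 1.

Definition vopen n (A : set 'cV[C]_n) : Prop :=
  forall v, A v -> exists2 e : R, 0 < e & forall w, vnorm2 (w - v) < e -> A w.

Definition last_basis n : 'cV[C]_n.+1 := \col_i ((i == ord_max)%:R).

Definition vi_reflection n (x : 'cV[C]_n.+1) (Rm : 'M[C]_n.+1) : Prop :=
  [/\ unitary_mx Rm, Rm *m last_basis n = x & \rank (Rm - 1%:M) = 1%N].

(* block diagonal matrix diag(U, 1) *)
Definition ext1 n (U : 'M[C]_n.+1) : 'M[C]_n.+2 :=
  \matrix_(i, j) (if (i < n.+1)%N && (j < n.+1)%N then U (inord i) (inord j)
                  else (i == j)%:R).

(* index shift: x n, U n live in dimension n+1 (paper's x_{n+1}, U_{n+1}) *)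
Definition virtual_isometry (x : forall n, 'cV[C]_n.+1) (U : forall n, 'M[C]_n.+1) : Prop :=
  U 0%N = x 0%N /\
  forall n, exists2 Rm : 'M[C]_n.+2, vi_reflection (x n.+1) Rm & U n.+1 = Rm *m ext1 (U n).

Definition expi (t : R) : C := complex.Complex (cos t) (sin t).

Definition eigenangle_enum n (U : 'M[C]_n.+1) (th : int -> R) : Prop :=
  [/\ forall k : int, th k < th (k + 1)%R,
      th 0 < 0 < th 1 &
      forall t : R, eigenvalue U (expi t) <-> exists k, th k = t].

Definition renorm (n : nat) (th : int -> R) (k : int) : R := n.+1%:R / (2 * pi) * th k.

Section Proba.
Context d (T : measurableType d) (P : probability T R).

(* X is uniformly distributed on the unit sphere of C^m: X is a random vector
   (measurable coordinates), lies on the sphere a.s., and its law is invariant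
   under all unitary transformations (which characterizes the uniform law). *)
Definition uniform_sphere m (X : T -> 'cV[C]_m) : Prop :=
  [/\ forall i, measurable_fun setT (fun w => complex.Re (X w i 0)) /\
                measurable_fun setT (fun w => complex.Im (X w i 0)),
      P [set w | on_sphere (X w)] = 1%E &
      forall V : 'M[C]_m, unitary_mx V -> forall A, vopen A ->
        P [set w | A (V *m X w)] = P [set w | A (X w)]].

Definition mutually_independent (x : forall n, T -> 'cV[C]_n.+1) : Prop :=
  forall (s : seq nat) (A : forall n, set 'cV[C]_n.+1), uniq s -> (forall n, vopen (A n)) ->
    fine (P (\bigcap_(i in [set` s]) [set w | A i (x i w)])) =
    \prod_(i <- s) fine (P [set w | A i (x i w)]).
End Proba.
End VI.

From HB Require Import structures.
From mathcomp Require Import all_boot all_order all_algebra.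
From mathcomp Require Import all_classical all_reals all_analysis.
From mathcomp Require Import complex.
From mathcomp Require Import lra ring.
Import Order.TTheory GRing.Theory Num.Theory numFieldNormedType.Exports.
Local Open Scope classical_set_scope.
Local Open Scope ring_scope.

(* The Maples-Najnudel-Nikeghbali bound gives, for |k| <= n^(1/4),
   |y_k^(n) - y_k| <= C (1 + k^2) n^(-1/3 + delta).  On the smaller window
   |k| <= n^eta the weight 1 + k^2 is at most 2 n^(2 eta), so the error is
   O(n^(2 eta - 1/3 + delta)); since eta < 1/6 the exponent is negative for
   delta = eps := (1/3 - 2 eta) / 2, and then equals -eps. *)

Section PowerBounds.
Context {R : realType}.

Lemma powR_ge1 (N e : R) : 1 <= N -> 0 <= e -> 1 <= N `^ e.
Proof. by move=> N1 e0; rewrite -(powRr0 N); exact: ler_powR. Qed.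

Lemma powR_double (N e : R) : 1 <= N -> N `^ (2 * e) = N `^ e * N `^ e.
Proof.
move=> N1; have N0 : N != 0 by rewrite gt_eqF // (lt_le_trans ltr01).
by rewrite mulr2n mulrDl mul1r powRD // N0 implybT.
Qed.

Lemma one_addX2_le_powR (N e x : R) :
  1 <= N -> 0 <= e -> `|x| <= N `^ e -> 1 + x ^+ 2 <= 2 * N `^ (2 * e).
Proof.
move=> N1 e0 xN.
have sqr_le : x ^+ 2 <= N `^ (2 * e).
  by rewrite powR_double // -real_normK ?num_real // expr2 ler_pM.
have := powR_ge1 N _ N1 (mulr_ge0 (ler0n _ 2) e0); lra.
Qed.

Lemma polynomial_weight_le_powR (C N e q x : R) :
  1 <= N -> 0 <= e -> `|x| <= N `^ e ->
  C * (1 + x ^+ 2) * N `^ q <= 2 * `|C| * N `^ (2 * e + q).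
Proof.
move=> N1 e0 xN.
have N0 : N != 0 by rewrite gt_eqF // (lt_le_trans ltr01).
rewrite powRD ?N0 ?implybT // mulrA; apply: ler_wpM2r; first exact: powR_ge0.
apply: le_trans (ler_norm _) _.
rewrite normrM -mulrA mulrCA ler_wpM2l // ger0_norm ?one_addX2_le_powR //.
by rewrite addr_ge0 ?sqr_ge0.
Qed.

End PowerBounds.

Theorem lemma3p3 (R : realType) (d : measure_display) (T : measurableType d)
  (P : probability T R)
  (x : forall n : nat, T -> 'cV[complex.complex R]_n.+1)
  (U : forall n : nat, T -> 'M[complex.complex R]_n.+1)
  (theta : nat -> T -> int -> R) (ylim : T -> int -> R) :
  (forall n, uniform_sphere P (x n)) ->
  mutually_independent P x ->
  {ae P, forall w, virtual_isometry (fun n => x n w) (fun n => U n w)} ->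
  {ae P, forall w, forall n, eigenangle_enum (U n w) (theta n w)} ->
  {ae P, forall w,
     (forall k : int, (fun n => renorm n (theta n w) k) @ \oo --> ylim w k) /\
     (forall delta : R, 0 < delta -> exists C : R, forall (n : nat) (k : int),
        `|(k%:~R : R)| <= n.+1%:R `^ 4^-1 ->
        `|renorm n (theta n w) k - ylim w k|
          <= C * (1 + (k%:~R : R) ^+ 2) * n.+1%:R `^ (- 3^-1 + delta))} ->
  forall eta : R, 0 < eta < 6^-1 ->
  exists2 eps : R, 0 < eps &
    {ae P, forall w, exists2 C : R, 0 < C & forall (n : nat) (k : int),
       `|(k%:~R : R)| <= n.+1%:R `^ eta ->
       `|renorm n (theta n w) k - ylim w k| <= C * n.+1%:R `^ (- eps)}.
Proof.
move=> _ _ _ _ mnn_bound eta /andP[eta0 eta_lt].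
pose eps : R := (3^-1 - 2 * eta) / 2.
have eps0 : 0 < eps by rewrite /eps; lra.
exists eps => //; apply: filterS mnn_bound => w [_ /(_ eps eps0) [C HC]].
exists (2 * `|C| + 1); first by have := normr_ge0 C; lra.
move=> n k k_small.
have N1 : 1 <= n.+1%:R :> R by rewrite ler1n.
have k_quarter : `|(k%:~R : R)| <= n.+1%:R `^ 4^-1.
  by apply: le_trans k_small _; apply: ler_powR => //; lra.
apply: le_trans (HC n k k_quarter) _.
apply: le_trans (polynomial_weight_le_powR C _ _ _ _ N1 (ltW eta0) k_small) _.
have -> : 2 * eta + (- 3^-1 + eps) = - eps by rewrite /eps; lra.
by rewrite ler_wpM2r ?powR_ge0 ?lerDl.
Qed.
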